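(* Let $G$ be a quadrangulation, let $v$ be a vertex of $G$, and let $i$ be an integer with $1 \leq i \leq e(v)-1$, where $e(v)=\max_{u\in V(G)} d_G(v,u)$ is the eccentricity of $v$. Then for every active vertex $w \in N_i(v)$ there exists another active vertex $w' \in N_i(v)$, $w'\neq w$, such that $w$ and $w'$ lie on a common face of $G$.
   Context: A quadrangulation is a maximal bipartite planar graph, considered with a plane embedding; equivalently, a simple connected plane bipartite graph in which every face is bounded by a cycle of length $4$. For a vertex $v$ and an integer $i\ge 0$, $N_i(v)$ denotes the set of vertices at distance exactly $i$ from $v$. Given the fixed vertex $v$, a vertex in $N_i(v)$ is called active if it has a neighbour in $N_{i+1}(v)$. *)

From mathcomp Require Import all_boot.
Set Implicit Arguments. Unset Strict Implicit. Unset Printing Implicit Defensive.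

Section Quad.
Variables (V : finType) (e : rel V).

Definition dart := {p : V * V | e p.1 p.2}.
Definition tail (d : dart) : V := (val d).1.
Definition head (d : dart) : V := (val d).2.

Definition simple_graph : Prop := symmetric e /\ irreflexive e.

Lemma rev_dart_proof (esym : symmetric e) (d : dart) :
  e ((val d).2, (val d).1).1 ((val d).2, (val d).1).2.
Proof. by rewrite /= esym; exact: (valP d). Qed.

Definition rev_dart (esym : symmetric e) (d : dart) : dart :=
  @exist _ (fun p : V * V => e p.1 p.2) ((val d).2, (val d).1)
    (rev_dart_proof esym d).

Definition face_succ (esym : symmetric e) (rot : dart -> dart) (d : dart) : dart :=
  rot (rev_dart esym d).

Definition rotation_system (rot : dart -> dart) : Prop :=
  injective rot /\ (forall d, tail (rot d) = tail d) /\
  (forall d d', tail d = tail d' -> fconnect rot d d').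

Definition graph_connected : Prop := forall u v : V, connect e u v.

Definition bipartite : Prop := exists c : V -> bool, forall u v, e u v -> c u != c v.

(* A quadrangulation: simple connected bipartite graph with a plane embedding
   (rotation system satisfying Euler's formula V - E + F = 2), in which every
   face is bounded by a cycle of length 4 (face boundary walk has 4 darts with
   4 pairwise distinct vertices). *)
Definition quadrangulation (esym : symmetric e) (rot : dart -> dart) : Prop :=
  irreflexive e /\ graph_connected /\ bipartite /\ rotation_system rot /\
  (#|V| + fcard (face_succ esym rot) predT).*2 = #|{: dart}| + 4 /\
  (forall d, size (orbit (face_succ esym rot) d) = 4 /\
             uniq (map tail (orbit (face_succ esym rot) d))).

Definition on_common_face (esym : symmetric e) (rot : dart -> dart) (u w : V) : Prop :=
  exists d : dart, (u \in map tail (orbit (face_succ esym rot) d)) /\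
                   (w \in map tail (orbit (face_succ esym rot) d)).

Fixpoint walkb (n : nat) (u v : V) : bool :=
  if n is n'.+1 then [exists w, e u w && walkb n' w v] else u == v.

(* graph distance (for a connected graph it is < #|V|) *)
Definition dist (u v : V) : nat := find (fun k => walkb k u v) (iota 0 #|V|).

Definition ecc (v : V) : nat := \max_(u : V) dist v u.

Definition sphere (v : V) (i : nat) : {set V} := [set u | dist v u == i].

Definition active (v : V) (i : nat) (w : V) : bool :=
  (w \in sphere v i) && [exists x, (x \in sphere v i.+1) && e w x].

End Quad.

(* Let w be active in N_i(v), with a neighbour x in N_(i+1)(v) and, along a
   shortest path, a neighbour y in N_(i-1)(v).  In a bipartite graph the
   neighbours of w lie in N_(i-1)(v) or N_(i+1)(v), so turning around w from
   the edge wx to the edge wy we meet two consecutive edges wx', wy' with x'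
   in N_(i+1)(v) and y' in N_(i-1)(v).  The face between them is a 4-cycle
   x' w y' z, and z, adjacent to both y' and x', lies in N_i(v) and is active. *)
From Pilot Require Import Defs.
From mathcomp Require Import all_boot.
From mathcomp Require Import zify.
Set Implicit Arguments. Unset Strict Implicit.

Section Walks.
Variables (V : finType) (e : rel V).

Lemma walkbSr n u w : walkb e n.+1 u w -> exists2 y, walkb e n u y & e y w.
Proof.
elim: n u => [|n IHn] u /= /existsP [y /andP [uy yw]].
  by exists u; rewrite // -(eqP yw).
have [z yz zw] := IHn _ yw.
by exists z => //=; apply/existsP; exists y; rewrite uy.
Qed.

Lemma walkb_rcons n u y w : walkb e n u y -> e y w -> walkb e n.+1 u w.
Proof.
elim: n u => [|n IHn] u /=.
  by move=> /eqP -> yw; apply/existsP; exists w; rewrite yw eqxx.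
move=> /existsP [z /andP [uz zy]] yw.
by apply/existsP; exists z; rewrite uz; apply: IHn zy yw.
Qed.

Lemma path_walkb p u : path e u p -> walkb e (size p) u (last u p).
Proof.
elim: p u => [|a p IHp] u //= /andP [ua pa].
by apply/existsP; exists a; rewrite ua; apply: IHp.
Qed.

Lemma walkb_color (c : V -> bool) : (forall a b, e a b -> c a != c b) ->
  forall n u w, walkb e n u w -> c w = c u (+) odd n.
Proof.
move=> hc; elim=> [|n IHn] u w /=; first by move=> /eqP ->; rewrite addbF.
move=> /existsP [y /andP [uy yw]]; rewrite (IHn _ _ yw).
by move: (hc _ _ uy); case: (c u); case: (c y); case: (odd n).
Qed.

End Walks.

Section Distance.
Variables (V : finType) (e : rel V).
Hypothesis conn : graph_connected e.

Lemma walkb_short u w : exists2 k, k < #|V| & walkb e k u w.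
Proof.
have /connectP [p pth ->] := conn u w.
have [q qth uq _] := shortenP pth.
exists (size q); last exact: path_walkb.
by have := max_card (mem (u :: q)); rewrite (card_uniqP uq).
Qed.

Lemma has_walkb_dist v u : has (fun k => walkb e k v u) (iota 0 #|V|).
Proof.
have [k ltk vu] := walkb_short v u.
by apply/hasP; exists k; rewrite ?mem_iota.
Qed.

Lemma dist_walkb v u : walkb e (dist e v u) v u.
Proof.
have hw := has_walkb_dist v u.
have := nth_find 0 hw; rewrite nth_iota //.
by move: hw; rewrite has_find size_iota.
Qed.

Lemma dist_le_walkb v u k : walkb e k v u -> dist e v u <= k.
Proof.
move=> vu; rewrite leqNgt; apply/negP => ltk.
have hw := has_walkb_dist v u.
have := before_find 0 ltk; rewrite nth_iota ?add0n ?vu //.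
by apply: ltn_trans ltk _; move: hw; rewrite has_find size_iota.
Qed.

Lemma dist_edge_le v a b : e a b -> dist e v b <= (dist e v a).+1.
Proof. by move=> ab; apply/dist_le_walkb/(walkb_rcons (dist_walkb v a) ab). Qed.

Lemma dist_parent v w : 0 < dist e v w ->
  exists2 y, e y w & dist e v y = (dist e v w).-1.
Proof.
move=> w_gt0; have := dist_walkb v w; rewrite -(prednK w_gt0).
move=> /walkbSr [y vy yw]; exists y => //.
have := dist_le_walkb vy; have := dist_edge_le v yw; lia.
Qed.

Lemma dist_middle v a z b : e a z -> e z b ->
  dist e v b = (dist e v a).+2 -> dist e v z = (dist e v a).+1.
Proof. move=> az zb; have := dist_edge_le v az; have := dist_edge_le v zb; lia. Qed.

Hypothesis esym : symmetric e.
Hypothesis bip : bipartite e.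

Lemma dist_edge v a b : e a b ->
  dist e v b = (dist e v a).+1 \/ dist e v a = (dist e v b).+1.
Proof.
move=> ab; have [c hc] := bip.
have := dist_edge_le v ab; have := dist_edge_le v (etrans (esym b a) ab).
have: odd (dist e v a) != odd (dist e v b).
  have := hc _ _ ab.
  rewrite (walkb_color hc (dist_walkb v a)) (walkb_color hc (dist_walkb v b)).
  by case: (c v); case: odd; case: odd.
case: (ltngtP (dist e v a) (dist e v b)) => [||->]; rewrite ?eqxx //; lia.
Qed.

End Distance.

Lemma iter_exit (T : Type) (f : T -> T) (P : pred T) n x :
  P x -> ~~ P (iter n f x) -> exists m, P (iter m f x) && ~~ P (f (iter m f x)).
Proof.
elim: n => [|n IHn] Px /=; first by rewrite Px.
case Pn: (P (iter n f x)) => Pfn; first by exists n; rewrite Pn Pfn.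
by apply: IHn; rewrite ?Pn.
Qed.

Section Faces.
Variables (V : finType) (e : rel V) (esym : symmetric e) (rot : dart e -> dart e).
Hypothesis rot_inj : injective rot.
Hypothesis tail_rot : forall d, tail (rot d) = tail d.
Local Notation face := (face_succ esym rot).

Lemma dart_edge (d : dart e) : e (tail d) (Defs.head d).
Proof. exact: valP d. Qed.

Lemma tail_face_succ d : tail (face d) = Defs.head d.
Proof. by rewrite /face_succ tail_rot. Qed.

Lemma face_succ_rev d : face (rev_dart esym d) = rot d.
Proof. by rewrite /face_succ; congr rot; apply: val_inj => /=; case: (val d). Qed.

Lemma face_succ_inj : injective face.
Proof.
move=> d d' /rot_inj /(congr1 val) [h t].
by apply: val_inj; rewrite [val d]surjective_pairing [val d']surjective_pairing h t.
Qed.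

Lemma orbit_face_size4 d : size (orbit face d) = 4 ->
  orbit face d = [:: d; face d; face (face d); face (face (face d))] /\
  face (face (face (face d))) = d.
Proof.
rewrite size_orbit => ord4; split; first by rewrite /orbit ord4.
by have := iter_order face_succ_inj d; rewrite ord4.
Qed.

Lemma rot_exit (P : pred (dart e)) d0 d1 : fconnect rot d0 d1 ->
  P d0 -> ~~ P d1 -> exists2 d, tail d = tail d0 & P d && ~~ P (rot d).
Proof.
move=> d01 Pd0; rewrite -(iter_findex d01) => /(iter_exit Pd0) [m Pm].
exists (iter m rot d0) => //.
by elim: m {Pm} => //= m <-; rewrite tail_rot.
Qed.

Lemma quad_face_rev_dart d : size (orbit face (rev_dart esym d)) = 4 ->
  let z := Defs.head (face (rot d)) in
  [/\ map (tail (e := e)) (orbit face (rev_dart esym d))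
         = [:: Defs.head d; tail d; Defs.head (rot d); z],
       e (Defs.head (rot d)) z & e z (Defs.head d)].
Proof.
move=> /orbit_face_size4 []; rewrite face_succ_rev => -> face4 z; split.
- by rewrite /= !tail_face_succ tail_rot.
- by rewrite /z -tail_face_succ dart_edge.
- have := dart_edge (face (face (rot d))).
  by rewrite -tail_face_succ face4 tail_face_succ.
Qed.

End Faces.

Section TurnAroundVertex.
Variables (V : finType) (e : rel V) (esym : symmetric e) (rot : dart e -> dart e).
Hypotheses (conn : graph_connected e) (bip : bipartite e).
Hypothesis tail_rot : forall d, tail (rot d) = tail d.
Hypothesis rot_conn : forall d d', tail d = tail d' -> fconnect rot d d'.

Lemma rot_dart_descent v w x : e w x -> 0 < dist e v w ->
    dist e v x = (dist e v w).+1 ->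
  exists2 d : dart e, tail d = w &
    dist e v (Defs.head d) = (dist e v w).+1 /\
    dist e v (Defs.head (rot d)) = (dist e v w).-1.
Proof.
move=> wx w_gt0 x_up; have [y yw y_down] := dist_parent conn w_gt0.
pose up (d : dart e) := dist e v (Defs.head d) == (dist e v w).+1.
have [|||d d_w /andP [/eqP d_up rotd_up]] := rot_exit tail_rot (P := up)
    (d0 := exist _ (w, x) wx) (d1 := exist _ (w, y) (etrans (esym w y) yw)).
- exact: rot_conn.
- by rewrite /up /Defs.head /= x_up.
- by rewrite /up /Defs.head /= y_down; lia.
have {}d_w : tail d = w := d_w.
exists d => //; split=> //.
have w_rotd : e w (Defs.head (rot d)) by rewrite -d_w -(tail_rot d) dart_edge.
by move: rotd_up => /eqP; case: (dist_edge conn esym bip v w_rotd); lia.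
Qed.

End TurnAroundVertex.

Theorem lemma2p4 (V : finType) (e : rel V) (esym : symmetric e)
    (rot : dart e -> dart e) (Q : quadrangulation esym rot)
    (v : V) (i : nat) (hi1 : 1 <= i) (hi2 : i <= ecc e v - 1)
    (w : V) (hw : active e v i w) :
  exists w' : V, [/\ active e v i w', w' != w & on_common_face esym rot w w'].
Proof.
case: Q => _ [conn [bip [[rot_inj [tail_rot rot_conn]] [_ quad]]]].
move: hw => /andP [+ /existsP [x /andP [+ wx]]]; rewrite !inE => /eqP w_i /eqP x_i.
have := rot_dart_descent esym conn bip tail_rot rot_conn (v := v) wx.
rewrite w_i x_i => /(_ hi1 erefl) [d d_w [x'_i y'_i]].
have [size4 uniq4] := quad (rev_dart esym d).
have [tails y'z zx'] := quad_face_rev_dart rot_inj tail_rot size4.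
set z := Defs.head (face_succ esym rot (rot d)) in tails y'z zx'.
set x' := Defs.head d in x'_i tails zx'.
set y' := Defs.head (rot d) in y'_i tails y'z.
have z_i : dist e v z = i by have := dist_middle conn (v := v) y'z zx'; lia.
rewrite tails d_w /= !inE in uniq4.
exists z; split.
- rewrite /active inE z_i eqxx; apply/existsP; exists x'.
  by rewrite inE x'_i eqxx zx'.
- by case/and4P: uniq4 => _ /norP [_ /negbTE]; rewrite eq_sym => ->.
- by exists (rev_dart esym d); rewrite tails d_w !inE !eqxx !orbT.
Qed.
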